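(* Let $|q|<1$ and $|qa|<|z|$, with parameters such that no denominator vanishes. Then $$f(a,k,z,q)+f(-a,-k,z,q)=2f(a^2,k^2,z^2,q^2).$$
   Context: Notation: $(x;q)_n=(1-x)(1-xq)\cdots(1-xq^{n-1})$, $(x_1,\dots,x_m;q)_n=(x_1;q)_n\cdots(x_m;q)_n$. Define $$f(a,k,z,q):=\sum_{n=1}^{\infty}\frac{(q\sqrt{k},-q\sqrt{k},k,z,k/a;q)_{n}}{(\sqrt{k},-\sqrt{k},qk,qk/z,qa;q)_{n}(1-q^n)}\left(\frac{qa}{z}\right)^{n}.$$ *)

From Stdlib Require Import Reals.
Open Scope R_scope.

Definition CC : Type := (R * R)%type.
Definition RtoC (x : R) : CC := (x, 0).
Definition C0 : CC := (0, 0).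
Definition C1 : CC := (1, 0).
Definition Cadd (u v : CC) : CC := (fst u + fst v, snd u + snd v).
Definition Copp (u : CC) : CC := (- fst u, - snd u).
Definition Csub (u v : CC) : CC := Cadd u (Copp v).
Definition Cmul (u v : CC) : CC :=
  (fst u * fst v - snd u * snd v, fst u * snd v + snd u * fst v).
Definition Cinv (u : CC) : CC :=
  (fst u / (fst u ^ 2 + snd u ^ 2), - snd u / (fst u ^ 2 + snd u ^ 2)).
Definition Cdiv (u v : CC) : CC := Cmul u (Cinv v).
Definition Cmod (u : CC) : R := sqrt (fst u ^ 2 + snd u ^ 2).
Fixpoint Cpow (u : CC) (n : nat) : CC :=
  match n with O => C1 | S m => Cmul (Cpow u m) u end.

Fixpoint qpoch (x q : CC) (n : nat) : CC :=
  match n with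
  | O => C1
  | S m => Cmul (qpoch x q m) (Csub C1 (Cmul x (Cpow q m)))
  end.

(* The n-th term of the series defining f(a,k,z,q), where r is a chosen
   square root of k (the term is invariant under r |-> -r). *)
Definition f_term (a k z q r : CC) (n : nat) : CC :=
  Cmul
    (Cdiv
      (Cmul (Cmul (Cmul (Cmul (qpoch (Cmul q r) q n) (qpoch (Copp (Cmul q r)) q n))
                        (qpoch k q n)) (qpoch z q n)) (qpoch (Cdiv k a) q n))
      (Cmul (Cmul (Cmul (Cmul (Cmul (qpoch r q n) (qpoch (Copp r) q n))
                        (qpoch (Cmul q k) q n)) (qpoch (Cdiv (Cmul q k) z) q n))
                        (qpoch (Cmul q a) q n))
            (Csub C1 (Cpow q n))))
    (Cpow (Cdiv (Cmul q a) z) n).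

(* partial sum  sum_{n=1}^{N} g n *)
Fixpoint psum (g : nat -> CC) (N : nat) : CC :=
  match N with O => C0 | S M => Cadd (psum g M) (g (S M)) end.

Definition series_sum_to (g : nat -> CC) (l : CC) : Prop :=
  forall eps : R, eps > 0 ->
    exists N : nat, forall M : nat, (M >= N)%nat -> Cmod (Csub (psum g M) l) < eps.

Definition f_is (a k z q r l : CC) : Prop := series_sum_to (f_term a k z q r) l.

Definition denoms_nonzero (a k z q r : CC) : Prop :=
  a <> C0 /\ z <> C0 /\
  forall n : nat, (n >= 1)%nat ->
    qpoch r q n <> C0 /\ qpoch (Copp r) q n <> C0 /\ qpoch (Cmul q k) q n <> C0 /\
    qpoch (Cdiv (Cmul q k) z) q n <> C0 /\ qpoch (Cmul q a) q n <> C0 /\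
    Csub C1 (Cpow q n) <> C0.

(** The well-poised quotient [(q√k,-q√k;q)_n/(√k,-√k;q)_n] equals
    [(1-kq^{2n})/(1-k)], which turns the terms of [f] into explicit
    [term a k (k/a) z q n].  Replacing [(a,k)] by [(qa,qk)] changes each term by
    a difference of consecutive boundary terms; iterating this telescope [N]
    times and bounding the q-Pochhammer symbols uniformly shows that the
    partial sums of [f] are asymptotic to those of the partial-fraction series
    [sum_{n>=1} g(kq^n) + g(aq^n/z) - g(kq^n/z) - g(aq^n)], [g x = x/(1-x)],
    which converges geometrically.  The theorem then follows termwise from
    [g(X^2) = (g(X) + g(-X))/2]. *)

From Stdlib Require Import Reals Lra Lia.
From Coquelicot Require Import Coquelicot.
From Pilot Require Defs.
Open Scope C_scope.

(** The complex numbers of [Defs] are pairs of reals with the usual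
    operations, i.e. literally Coquelicot's [C]; we work in [C] so that
    [ring] and [field] apply, and translate with the following equations. *)

Lemma Defs_Cpow (u : C) (n : nat) : Defs.Cpow u n = u ^ n.
Proof.
  induction n as [|n IH]; [reflexivity|].
  change (Defs.Cpow u n * u = u * u ^ n). rewrite IH. ring.
Qed.

Definition qp (x q : C) (n : nat) : C := Defs.qpoch x q n.
Definition ps (f : nat -> C) (N : nat) : C := Defs.psum f N.

Lemma qp0 (x q : C) : qp x q 0 = 1.
Proof. reflexivity. Qed.

Lemma qpS (x q : C) (n : nat) : qp x q (S n) = qp x q n * (1 - x * q ^ n).
Proof. unfold qp. simpl. rewrite Defs_Cpow. reflexivity. Qed.

Lemma qp_shift (x q : C) (n : nat) : qp x q (S n) = (1 - x) * qp (x * q) q n.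
Proof.
  induction n as [|n IH].
  - rewrite qpS, !qp0. simpl. ring.
  - rewrite qpS, IH, qpS. simpl. ring.
Qed.

Lemma qp_shift_div (x q : C) (n : nat) :
  1 - x <> 0 -> qp (x * q) q n = qp x q (S n) / (1 - x).
Proof. intros H. rewrite qp_shift. field. exact H. Qed.

Lemma qp_split (x q : C) (j n : nat) :
  qp x q (j + n) = qp x q j * qp (x * q ^ j) q n.
Proof.
  induction n as [|n IH].
  - rewrite Nat.add_0_r, qp0. ring.
  - rewrite Nat.add_succ_r, !qpS, IH, Cpow_add_r. ring.
Qed.

Lemma qp_ratio (x q : C) (n : nat) :
  qp (x * q) q n * (1 - x) = qp x q n * (1 - x * q ^ n).
Proof. rewrite <- qpS, qp_shift. ring. Qed.

Definition factors_nonzero (x q : C) : Prop := forall i : nat, 1 - x * q ^ i <> 0.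

Lemma qp_nonzero (x q : C) (n : nat) : factors_nonzero x q -> qp x q n <> 0.
Proof.
  intros Hx. induction n as [|n IH].
  - rewrite qp0. intro E. injection E. lra.
  - rewrite qpS. apply Cmult_neq_0; auto.
Qed.

Lemma factors_of_qp (x q : C) :
  (forall n, (n >= 1)%nat -> qp x q n <> 0) -> factors_nonzero x q.
Proof. intros H i E. apply (H (S i)); [lia|]. rewrite qpS, E. ring. Qed.

Lemma factors_nonzero_shift (x q : C) (j : nat) :
  factors_nonzero x q -> factors_nonzero (x * q ^ j) q.
Proof.
  intros H i. replace (x * q ^ j * q ^ i) with (x * q ^ (j + i)); [apply H|].
  rewrite Cpow_add_r. ring.
Qed.

Lemma pow_unit (s : R) (n : nat) : (0 <= s <= 1)%R -> (0 <= s ^ n <= 1)%R.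
Proof. intros H. induction n as [|n IH]; simpl; nra. Qed.

Lemma Cmod_1_minus_ge (u : C) : (1 - Cmod u <= Cmod (1 - u))%R.
Proof.
  pose proof (Cmod_triangle (1 - u) u) as T.
  replace (1 - u + u) with (RtoC 1) in T by ring. rewrite Cmod_1 in T. lra.
Qed.

Lemma Cmod_minus_le (u v : C) : (Cmod (u - v) <= Cmod u + Cmod v)%R.
Proof. pose proof (Cmod_triangle u (- v)) as T. rewrite Cmod_opp in T. exact T. Qed.

Lemma Cmod_1_minus_le (u : C) : (Cmod (1 - u) <= 1 + Cmod u)%R.
Proof. rewrite <- Cmod_1 at 2. apply Cmod_minus_le. Qed.

Lemma one_minus_nonzero (u : C) : (Cmod u < 1)%R -> 1 - u <> 0.
Proof.
  intros H E. pose proof (Cmod_1_minus_ge u) as T. rewrite E, Cmod_0 in T. lra.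
Qed.

Lemma one_minus_pow_nonzero (q : C) : (Cmod q < 1)%R -> forall i, 1 - q ^ S i <> 0.
Proof.
  intros Hq i. apply one_minus_nonzero. rewrite Cmod_pow.
  pose proof (pow_lt_1_compat (Cmod q) (S i) ltac:(pose proof (Cmod_ge_0 q); lra) ltac:(lia)).
  lra.
Qed.

Lemma Cmod_mult_le (x y : C) (X Y : R) :
  (Cmod x <= X)%R -> (Cmod y <= Y)%R -> (Cmod (x * y) <= X * Y)%R.
Proof. intros H1 H2. rewrite Cmod_mult. apply Rmult_le_compat; auto using Cmod_ge_0. Qed.

Lemma Cmod_div_le (x y : C) (X Y : R) :
  (Cmod x <= X)%R -> (0 < Y)%R -> (Y <= Cmod y)%R -> (Cmod (x / y) <= X / Y)%R.
Proof.
  intros H1 H2 H3. assert (y <> 0) by (apply Cmod_gt_0; lra).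
  rewrite Cmod_div by assumption. apply Rmult_le_compat; auto using Cmod_ge_0.
  - apply Rlt_le, Rinv_0_lt_compat; lra.
  - apply Rinv_le_contravar; assumption.
Qed.

Lemma exp_le_mono (u v : R) : (u <= v)%R -> (exp u <= exp v)%R.
Proof.
  intros H. destruct (Rle_lt_or_eq_dec _ _ H) as [Hlt| ->]; [|lra].
  apply Rlt_le, exp_increasing, Hlt.
Qed.

Lemma geom_sum_nonneg (A r : R) : (0 <= A)%R -> (r < 1)%R -> (0 <= A / (1 - r))%R.
Proof. intros HA Hr. apply Rmult_le_pos; [exact HA | apply Rlt_le, Rinv_0_lt_compat; lra]. Qed.

Lemma geom_small (A r : R) : (0 <= A)%R -> (0 <= r < 1)%R ->
  forall eps, (0 < eps)%R -> exists N, forall n, (n >= N)%nat -> (A * r ^ n < eps)%R.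
Proof.
  intros HA Hr eps Heps.
  destruct (pow_lt_1_zero r ltac:(rewrite Rabs_pos_eq; lra) (eps / (A + 1)))
    as [N HN]; [apply Rdiv_lt_0_compat; lra|].
  exists N. intros n Hn. specialize (HN n Hn).
  rewrite Rabs_pos_eq in HN by (apply pow_le; lra).
  apply (Rmult_lt_compat_l (A + 1)) in HN; [|lra].
  replace ((A + 1) * (eps / (A + 1)))%R with eps in HN by (field; lra).
  pose proof (pow_le r n ltac:(lra)). nra.
Qed.

(** * Size of the q-Pochhammer symbol for [|q| < 1] *)

Section PochhammerBounds.
Variable q : C.
Hypothesis Hq : (Cmod q < 1)%R.

Let s_unit : (0 <= Cmod q <= 1)%R.
Proof. split; [apply Cmod_ge_0 | lra]. Qed.

(** Upper bound [|(x;q)_n| <= exp(|x|/(1-|q|))], from [|1-u| <= exp |u|]. *)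
Lemma qp_upper (x : C) (n : nat) :
  (Cmod (qp x q n) <= exp (Cmod x / (1 - Cmod q)))%R.
Proof.
  pose proof (Cmod_ge_0 x) as Hx.
  assert (Partial : (Cmod (qp x q n) <= exp (Cmod x * (1 - Cmod q ^ n) / (1 - Cmod q)))%R).
  { induction n as [|n IH].
    - rewrite qp0, Cmod_1. simpl.
      replace (Cmod x * (1 - 1) / (1 - Cmod q))%R with 0%R by (field; lra).
      rewrite exp_0. lra.
    - rewrite qpS, Cmod_mult.
      replace (Cmod x * (1 - Cmod q ^ S n) / (1 - Cmod q))%R with
        (Cmod x * (1 - Cmod q ^ n) / (1 - Cmod q) + Cmod x * Cmod q ^ n)%R
        by (simpl; field; lra).
      rewrite exp_plus. apply Rmult_le_compat; auto using Cmod_ge_0.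
      eapply Rle_trans; [apply Cmod_1_minus_le|].
      rewrite Cmod_mult, Cmod_pow. apply exp_ineq1_le. }
  eapply Rle_trans; [exact Partial|]. apply exp_le_mono.
  pose proof (pow_unit (Cmod q) n s_unit).
  unfold Rdiv. apply Rmult_le_compat_r; [apply Rlt_le, Rinv_0_lt_compat; lra|]. nra.
Qed.

(** If [|y| <= (1-|q|)/2] then [|(y;q)_n| >= 1/2], by the Weierstrass
    product inequality [prod (1 - e_i) >= 1 - sum e_i]. *)
Lemma qp_small_lower (y : C) (n : nat) :
  (Cmod y <= (1 - Cmod q) / 2)%R -> (1 / 2 <= Cmod (qp y q n))%R.
Proof.
  intros Hy. pose proof (Cmod_ge_0 y) as Hy0.
  set (T n := (Cmod y * (1 - Cmod q ^ n) / (1 - Cmod q))%R).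
  assert (HT : forall n, (0 <= T n <= 1 / 2)%R).
  { intros m. pose proof (pow_unit (Cmod q) m s_unit). unfold T. split.
    - apply Rmult_le_pos; [nra | apply Rlt_le, Rinv_0_lt_compat; lra].
    - apply Rle_trans with (Cmod y / (1 - Cmod q))%R.
      + unfold Rdiv. apply Rmult_le_compat_r; [apply Rlt_le, Rinv_0_lt_compat; lra|]. nra.
      + apply Rcomplements.Rle_div_l; lra. }
  assert (Weierstrass : (1 - T n <= Cmod (qp y q n))%R).
  { induction n as [|n IH].
    - rewrite qp0, Cmod_1. unfold T. simpl.
      replace (Cmod y * (1 - 1) / (1 - Cmod q))%R with 0%R by (field; lra). lra.
    - set (e := (Cmod y * Cmod q ^ n)%R).
      assert (He : (0 <= e <= 1 / 2)%R).
      { pose proof (pow_unit (Cmod q) n s_unit). unfold e. split; nra. }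
      assert (Hfac : (1 - e <= Cmod (1 - y * q ^ n))%R).
      { eapply Rle_trans; [|apply Cmod_1_minus_ge]. rewrite Cmod_mult, Cmod_pow. unfold e. lra. }
      replace (T (S n)) with (T n + e)%R by (unfold T, e; simpl; field; lra).
      rewrite qpS, Cmod_mult. specialize (HT n).
      assert (0 <= T n * e)%R by nra.
      apply Rle_trans with ((1 - T n) * (1 - e))%R; [nra|].
      apply Rmult_le_compat; lra. }
  specialize (HT n). lra.
Qed.

Lemma qp_lower_upto (x : C) (N : nat) : factors_nonzero x q ->
  exists L, (0 < L)%R /\ forall m, (m <= N)%nat -> (L <= Cmod (qp x q m))%R.
Proof.
  intros Hx. induction N as [|N [L [HL H]]].
  - exists 1%R. split; [lra|]. intros m Hm.
    replace m with 0%nat by lia. rewrite qp0, Cmod_1. lra.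
  - exists (Rmin L (Cmod (qp x q (S N)))). split.
    + apply Rmin_glb_lt; [exact HL|]. apply Cmod_gt_0, qp_nonzero, Hx.
    + intros m Hm. destruct (Nat.eq_dec m (S N)) as [-> | Hne]; [apply Rmin_r|].
      eapply Rle_trans; [apply Rmin_l|]. apply H. lia.
Qed.

(** A Pochhammer symbol without vanishing factors is bounded away from zero:
    beyond an index [i0] the remaining factors are close to 1. *)
Lemma qp_lower (x : C) : factors_nonzero x q ->
  exists L, (0 < L)%R /\ forall m, (L <= Cmod (qp x q m))%R.
Proof.
  intros Hx.
  destruct (geom_small (Cmod x) (Cmod q) (Cmod_ge_0 x) ltac:(pose proof s_unit; lra)
              ((1 - Cmod q) / 2) ltac:(lra)) as [i0 Hi0].
  destruct (qp_lower_upto x i0 Hx) as [L [HL HLm]].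
  exists (L / 2)%R. split; [lra|]. intros m.
  destruct (Compare_dec.le_lt_dec m i0) as [Hm|Hm]; [specialize (HLm m Hm); lra|].
  replace m with (i0 + (m - i0))%nat by lia. rewrite qp_split, Cmod_mult.
  assert (Htail : (1 / 2 <= Cmod (qp (x * q ^ i0) q (m - i0)))%R).
  { apply qp_small_lower. rewrite Cmod_mult, Cmod_pow. apply Rlt_le, Hi0. lia. }
  specialize (HLm i0 (le_n _)). nra.
Qed.

Lemma qp_shifted_lower (x : C) : factors_nonzero x q ->
  exists d, (0 < d)%R /\ forall j n, (d <= Cmod (qp (x * q ^ j) q n))%R.
Proof.
  intros Hx. destruct (qp_lower x Hx) as [L [HL H]].
  set (B := exp (Cmod x / (1 - Cmod q))).
  assert (HB : (0 < B)%R) by apply exp_pos.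
  exists (L / B)%R. split; [apply Rdiv_lt_0_compat; assumption|]. intros j n.
  specialize (H (j + n)%nat). rewrite qp_split, Cmod_mult in H.
  pose proof (qp_upper x j) as Hup. fold B in Hup.
  pose proof (Cmod_ge_0 (qp (x * q ^ j) q n)).
  apply Rcomplements.Rle_div_l; [exact HB|]. nra.
Qed.

Lemma factor_lower (x : C) : factors_nonzero x q ->
  exists d, (0 < d)%R /\ forall j, (d <= Cmod (1 - x * q ^ j))%R.
Proof.
  intros Hx. destruct (qp_shifted_lower x Hx) as [d [Hd H]].
  exists d. split; [exact Hd|]. intros j. specialize (H j 1%nat).
  rewrite qpS, qp0 in H. simpl in H.
  replace (1 * (1 - x * q ^ j * 1)) with (1 - x * q ^ j) in H by ring.
  exact H.
Qed.

End PochhammerBounds.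

Fixpoint sum_below (F : nat -> C) (M : nat) : C :=
  match M with O => 0 | S M' => sum_below F M' + F M' end.

Lemma ps0 (f : nat -> C) : ps f 0 = 0.
Proof. reflexivity. Qed.

Lemma psS (f : nat -> C) (N : nat) : ps f (S N) = ps f N + f (S N).
Proof. reflexivity. Qed.

Lemma ps_ext (f h : nat -> C) (N : nat) :
  (forall m, f (S m) = h (S m)) -> ps f N = ps h N.
Proof. intros H. induction N as [|N IH]; [reflexivity|]. rewrite !psS, IH, H. reflexivity. Qed.

Lemma ps_sum_below (f : nat -> C) (N : nat) : ps f N = sum_below (fun j => f (S j)) N.
Proof. induction N as [|N IH]; [reflexivity|]. rewrite psS, IH. reflexivity. Qed.

Lemma sum_below_plus (F G : nat -> C) (M : nat) :
  sum_below (fun j => F j + G j) M = sum_below F M + sum_below G M.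
Proof. induction M as [|M IH]; simpl; [ring|]. rewrite IH. ring. Qed.

Section GeometricSums.
Variables (F : nat -> C) (A r : R).
Hypothesis HA : (0 <= A)%R.
Hypothesis Hr : (0 <= r < 1)%R.
Hypothesis HF : forall j, (Cmod (F j) <= A * r ^ j)%R.

Lemma sum_below_tail (N d : nat) :
  (Cmod (sum_below F (N + d) - sum_below F N) <= A * r ^ N / (1 - r))%R.
Proof.
  assert (Exact : (Cmod (sum_below F (N + d) - sum_below F N)
                   <= A * r ^ N * (1 - r ^ d) / (1 - r))%R).
  { induction d as [|d IH].
    - rewrite Nat.add_0_r. replace (sum_below F N - sum_below F N) with (RtoC 0) by ring.
      rewrite Cmod_0. simpl.
      replace (A * r ^ N * (1 - 1) / (1 - r))%R with 0%R by (field; lra). lra.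
    - rewrite Nat.add_succ_r. simpl sum_below.
      replace (sum_below F (N + d) + F (N + d)%nat - sum_below F N)
        with ((sum_below F (N + d) - sum_below F N) + F (N + d)%nat) by ring.
      eapply Rle_trans; [apply Cmod_triangle|].
      specialize (HF (N + d)%nat). rewrite pow_add in HF.
      replace (A * r ^ N * (1 - r ^ S d) / (1 - r))%R with
        (A * r ^ N * (1 - r ^ d) / (1 - r) + A * (r ^ N * r ^ d))%R by (simpl; field; lra).
      lra. }
  eapply Rle_trans; [exact Exact|]. unfold Rdiv.
  apply Rmult_le_compat_r; [apply Rlt_le, Rinv_0_lt_compat; lra|].
  pose proof (pow_unit r d ltac:(lra)). pose proof (pow_unit r N ltac:(lra)).
  assert (0 <= A * r ^ N)%R by (apply Rmult_le_pos; lra). nra.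
Qed.

Lemma sum_below_bound (M : nat) : (Cmod (sum_below F M) <= A / (1 - r))%R.
Proof.
  pose proof (sum_below_tail 0 M) as T. simpl in T.
  replace (sum_below F M - 0) with (sum_below F M) in T by ring. rewrite Rmult_1_r in T. exact T.
Qed.

End GeometricSums.

Lemma ps_bound (f : nat -> C) (A r : R) (N : nat) : (0 <= A)%R -> (0 <= r < 1)%R ->
  (forall m, (Cmod (f (S m)) <= A * r ^ S m)%R) -> (Cmod (ps f N) <= A / (1 - r))%R.
Proof.
  intros HA Hr H. rewrite ps_sum_below.
  eapply Rle_trans; [apply (sum_below_bound _ (A * r) r); [nra | lra |]|].
  - intros j. rewrite Rmult_assoc. apply H.
  - unfold Rdiv. apply Rmult_le_compat_r; [apply Rlt_le, Rinv_0_lt_compat; lra | nra].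
Qed.

Definition cv (u : nat -> C) (l : C) : Prop :=
  forall eps : R, (eps > 0)%R ->
    exists N : nat, forall n : nat, (n >= N)%nat -> (Cmod (u n - l) < eps)%R.

Lemma cv_plus (u v : nat -> C) (l m : C) :
  cv u l -> cv v m -> cv (fun n => u n + v n) (l + m).
Proof.
  intros Hu Hv eps Heps.
  destruct (Hu (eps / 2)%R ltac:(lra)) as [N1 H1]. destruct (Hv (eps / 2)%R ltac:(lra)) as [N2 H2].
  exists (max N1 N2). intros n Hn.
  replace (u n + v n - (l + m)) with ((u n - l) + (v n - m)) by ring.
  eapply Rle_lt_trans; [apply Cmod_triangle|].
  specialize (H1 n ltac:(lia)). specialize (H2 n ltac:(lia)). lra.
Qed.

Lemma cv_scale (c : C) (u : nat -> C) (l : C) : cv u l -> cv (fun n => c * u n) (c * l).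
Proof.
  intros Hu eps Heps.
  destruct (Hu (eps / (Cmod c + 1))%R) as [N H];
    [apply Rlt_gt, Rdiv_lt_0_compat; pose proof (Cmod_ge_0 c); lra|].
  exists N. intros n Hn. specialize (H n Hn).
  replace (c * u n - c * l) with (c * (u n - l)) by ring. rewrite Cmod_mult.
  pose proof (Cmod_ge_0 c). pose proof (Cmod_ge_0 (u n - l)).
  apply (Rmult_lt_compat_l (Cmod c + 1)) in H; [|lra].
  replace ((Cmod c + 1) * (eps / (Cmod c + 1)))%R with eps in H by (field; lra). nra.
Qed.

Lemma cv_ext (u v : nat -> C) (l : C) : (forall n, u n = v n) -> cv v l -> cv u l.
Proof.
  intros E Hv eps Heps. destruct (Hv eps Heps) as [N HN].
  exists N. intros n Hn. rewrite E. apply HN, Hn.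
Qed.

Lemma cv_approx (u v : nat -> C) (l : C) :
  (forall eps, (eps > 0)%R -> exists N, forall n, (n >= N)%nat -> (Cmod (u n - v n) < eps)%R) ->
  cv v l -> cv u l.
Proof.
  intros Huv Hv eps Heps.
  destruct (Huv (eps / 2)%R ltac:(lra)) as [N1 H1]. destruct (Hv (eps / 2)%R ltac:(lra)) as [N2 H2].
  exists (max N1 N2). intros n Hn.
  replace (u n - l) with ((u n - v n) + (v n - l)) by ring.
  eapply Rle_lt_trans; [apply Cmod_triangle|].
  specialize (H1 n ltac:(lia)). specialize (H2 n ltac:(lia)). lra.
Qed.

(** Completeness of [C], inherited coordinatewise from that of [R]. *)
Lemma cv_cauchy (u : nat -> C) :
  (forall eps, (eps > 0)%R -> exists N, forall n m, (n >= N)%nat -> (m >= N)%nat ->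
     (Cmod (u n - u m) < eps)%R) ->
  exists l, cv u l.
Proof.
  intros H.
  assert (Hfst : Cauchy_crit (fun n => fst (u n))).
  { intros eps Heps. destruct (H eps Heps) as [N HN]. exists N. intros n m Hn Hm.
    eapply Rle_lt_trans; [|apply (HN n m Hn Hm)].
    eapply Rle_trans; [|apply Rmax_Cmod]. apply Rmax_l. }
  assert (Hsnd : Cauchy_crit (fun n => snd (u n))).
  { intros eps Heps. destruct (H eps Heps) as [N HN]. exists N. intros n m Hn Hm.
    eapply Rle_lt_trans; [|apply (HN n m Hn Hm)].
    eapply Rle_trans; [|apply Rmax_Cmod]. apply Rmax_r. }
  destruct (Rcomplete.R_complete _ Hfst) as [l1 Hl1].
  destruct (Rcomplete.R_complete _ Hsnd) as [l2 Hl2].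
  exists (l1, l2). intros eps Heps.
  set (e := (eps / 2)%R).
  destruct (Hl1 e ltac:(unfold e; lra)) as [N1 HN1].
  destruct (Hl2 e ltac:(unfold e; lra)) as [N2 HN2].
  exists (max N1 N2). intros n Hn.
  specialize (HN1 n ltac:(lia)). specialize (HN2 n ltac:(lia)). unfold Rdist in HN1, HN2.
  set (w := u n - (l1, l2)).
  assert (Hmax : (Rmax (Rabs (fst w)) (Rabs (snd w)) < e)%R) by (apply Rmax_lub_lt; assumption).
  assert (0 <= Rmax (Rabs (fst w)) (Rabs (snd w)))%R
    by (eapply Rle_trans; [apply Rabs_pos | apply Rmax_l]).
  assert (Hsqrt : (sqrt 2 < 2)%R).
  { pose proof (sqrt_pos 2). pose proof (sqrt_sqrt 2 ltac:(lra)). nra. }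
  pose proof (sqrt_pos 2). pose proof (Cmod_2Rmax w).
  unfold e in Hmax. nra.
Qed.

Lemma sum_below_converges (F : nat -> C) (A r : R) : (0 <= A)%R -> (0 <= r < 1)%R ->
  (forall j, (Cmod (F j) <= A * r ^ j)%R) -> exists l, cv (sum_below F) l.
Proof.
  intros HA Hr HF. apply cv_cauchy. intros eps Heps.
  destruct (geom_small (A / (1 - r)) r ltac:(apply geom_sum_nonneg; lra) Hr (eps / 2) ltac:(lra))
    as [N HN].
  exists N. intros n m Hn Hm.
  pose proof (sum_below_tail F A r HA Hr HF N (n - N)) as Tn.
  pose proof (sum_below_tail F A r HA Hr HF N (m - N)) as Tm.
  replace (N + (n - N))%nat with n in Tn by lia. replace (N + (m - N))%nat with m in Tm by lia.
  replace (sum_below F n - sum_below F m)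
    with ((sum_below F n - sum_below F N) - (sum_below F m - sum_below F N)) by ring.
  eapply Rle_lt_trans; [apply Cmod_minus_le|].
  specialize (HN N (le_n _)).
  replace (A / (1 - r) * r ^ N)%R with (A * r ^ N / (1 - r))%R in HN by (field; lra). lra.
Qed.

(** * The telescoping identity *)

(** With [c = k/a], the [n]-th term of [f(a,k,z,q)] equals [term a k c z q n]
    (lemma [f_term_reduce] below): the well-poised quotient
    [(q√k,-q√k;q)_n/(√k,-√k;q)_n] collapses to [(1-kq^{2n})/(1-k)]. *)
Definition core (a k c z q : C) (n : nat) : C :=
  qp z q n * qp c q n / ((1 - k * q ^ n) * qp (q * k / z) q n * qp (q * a) q n).

Definition term (a k c z q : C) (n : nat) : C :=
  (1 - k * q ^ n * q ^ n) / (1 - q ^ n) * (q * a / z) ^ n * core a k c z q n.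

Definition bdry (a k c z q : C) (m : nat) : C :=
  - (q * a / z) ^ S m * (1 - k * a * q ^ S (S m) / z) / (1 - q * a / z)
    * core a k c z q (S m).

Definition g (x : C) : C := x / (1 - x).
Definition pf (a k z q : C) : C := g (q * k) + g (q * a / z) - g (q * k / z) - g (q * a).

Lemma nonzero_by_eq (u v : C) : v <> 0 -> u = v -> u <> 0.
Proof. intros H ->. exact H. Qed.

Section Telescope.
Variables a k c z q : C.
Hypothesis Hc : c * a = k.
Hypothesis Hz : z <> 0.
Hypothesis Haz : 1 - q * a / z <> 0.
Hypothesis Hk : factors_nonzero (q * k) q.
Hypothesis Hkz : factors_nonzero (q * k / z) q.
Hypothesis Ha : factors_nonzero (q * a) q.
Hypothesis Hq : forall i, 1 - q ^ S i <> 0.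

(** Closes a goal [u <> 0] when [u] is, up to [ring], a hypothesis [v <> 0]
    or [z * v]. *)
Local Ltac nonzero_from_hyps :=
  match goal with
  | |- ?u <> _ =>
    first [ assumption
          | match goal with H : ?v <> _ |- _ =>
              first [ apply (nonzero_by_eq u v H); ring
                    | apply (nonzero_by_eq u (z * v) (Cmult_neq_0 _ _ Hz H)); field; exact Hz ]
            end ]
  end.

Let factor0 (x : C) : factors_nonzero x q -> 1 - x <> 0.
Proof. intros H. apply (nonzero_by_eq _ _ (H 0%nat)). simpl. ring. Qed.

Lemma term_telescope (m : nat) :
  term a k c z q (S m) - term (q * a) (q * k) c z q (S m)
  = bdry a k c z q (S m) - bdry a k c z q m.
Proof.
  pose proof (qp_nonzero _ _ m Hkz) as N1. pose proof (qp_nonzero _ _ m Ha) as N2.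
  pose proof (factor0 _ Hk) as K0. pose proof (Hk m) as K1. pose proof (Hk (S m)) as K2.
  pose proof (factor0 _ Hkz) as Z0. pose proof (Hkz m) as Z1. pose proof (Hkz (S m)) as Z2.
  pose proof (factor0 _ Ha) as A0. pose proof (Ha m) as A1. pose proof (Ha (S m)) as A2.
  pose proof (Hq m) as Q1.
  unfold term, bdry, core.
  replace (q * (q * k) / z) with ((q * k / z) * q) by (field; exact Hz).
  replace (q * (q * a) / z) with (q * (q * a / z)) by (field; exact Hz).
  replace (q * (q * a)) with ((q * a) * q) by ring.
  rewrite Cpow_mult_l.
  rewrite (qp_shift_div (q * k / z)), (qp_shift_div (q * a)) by assumption.
  rewrite !qpS, !Cpow_S in *. subst k.
  field. repeat split; nonzero_from_hyps.
Qed.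

Lemma bdry_0 : bdry a k c z q 0 = - pf a k z q.
Proof.
  pose proof (factor0 _ Hk). pose proof (factor0 _ Hkz). pose proof (factor0 _ Ha).
  unfold bdry, core, pf, g. rewrite !qpS, !qp0. simpl. subst k.
  field. repeat split; nonzero_from_hyps.
Qed.

Lemma telescope_sum (N : nat) :
  ps (term a k c z q) N - ps (term (q * a) (q * k) c z q) N = bdry a k c z q N + pf a k z q.
Proof.
  induction N as [|N IH].
  - rewrite !ps0, bdry_0. ring.
  - rewrite !psS.
    replace (ps (term a k c z q) N + term a k c z q (S N)
             - (ps (term (q * a) (q * k) c z q) N + term (q * a) (q * k) c z q (S N)))
      with ((ps (term a k c z q) N - ps (term (q * a) (q * k) c z q) N)
            + (term a k c z q (S N) - term (q * a) (q * k) c z q (S N))) by ring.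
    rewrite IH, term_telescope. ring.
Qed.

End Telescope.

(** * Convergence to the partial-fraction series *)

(** [pf_sum a k z q N = sum_{j<N} pf (q^j a) (q^j k)]: the partial sums of
    [sum_{n>=1} (kq^n/(1-kq^n) + (aq^n/z)/(1-aq^n/z) - (kq^n/z)/(1-kq^n/z)
    - aq^n/(1-aq^n))], the partial-fraction form of [f(a,k,z,q)]. *)
Definition pf_sum (a k z q : C) (N : nat) : C :=
  sum_below (fun j => pf (q ^ j * a) (q ^ j * k) z q) N.

Lemma pow_shift_le (s r : R) (j n : nat) : (0 <= s <= 1)%R -> (0 <= r)%R ->
  ((s ^ j * r) ^ S n <= s ^ j * r ^ S n)%R.
Proof.
  intros Hs Hr. rewrite Rpow_mult_distr. simpl.
  pose proof (pow_unit s j Hs). pose proof (pow_unit (s ^ j) n ltac:(lra)).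
  pose proof (pow_le r n Hr). assert (0 <= r * r ^ n)%R by nra.
  assert (0 <= s ^ j * (r * r ^ n))%R by nra. nra.
Qed.

Section PartialFractions.
Variables a k c z q : C.
Hypothesis Hq : (Cmod q < 1)%R.
Hypothesis Hqa : (Cmod (q * a) < Cmod z)%R.
Hypothesis Hc : c * a = k.
Hypothesis Hk : factors_nonzero (q * k) q.
Hypothesis Hkz : factors_nonzero (q * k / z) q.
Hypothesis Ha : factors_nonzero (q * a) q.

Let aj (j : nat) : C := q ^ j * a.
Let kj (j : nat) : C := q ^ j * k.

Let s_unit : (0 <= Cmod q <= 1)%R.
Proof. split; [apply Cmod_ge_0 | lra]. Qed.

Lemma z_nonzero : z <> 0.
Proof. intros E. rewrite E, Cmod_0 in Hqa. pose proof (Cmod_ge_0 (q * a)). lra. Qed.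

Lemma rho_lt_1 : (Cmod (q * a / z) < 1)%R.
Proof.
  pose proof z_nonzero. rewrite Cmod_div by assumption.
  apply Rcomplements.Rlt_div_l; [apply Cmod_gt_0; assumption | lra].
Qed.

Let rho_unit : (0 <= Cmod (q * a / z) < 1)%R.
Proof. split; [apply Cmod_ge_0 | apply rho_lt_1]. Qed.

Lemma Cmod_qaj_z (j : nat) : Cmod (q * aj j / z) = (Cmod q ^ j * Cmod (q * a / z))%R.
Proof.
  unfold aj. replace (q * (q ^ j * a) / z) with (q ^ j * (q * a / z))
    by (field; apply z_nonzero).
  rewrite Cmod_mult, Cmod_pow. reflexivity.
Qed.

Let shift_qk (j : nat) : q * kj j = q * k * q ^ j.
Proof. unfold kj. ring. Qed.
Let shift_qkz (j : nat) : q * kj j / z = q * k / z * q ^ j.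
Proof. unfold kj. field. apply z_nonzero. Qed.
Let shift_qa (j : nat) : q * aj j = q * a * q ^ j.
Proof. unfold aj. ring. Qed.

Lemma telescope_shift (j N : nat) :
  ps (term (aj j) (kj j) c z q) N - ps (term (aj (S j)) (kj (S j)) c z q) N
  = bdry (aj j) (kj j) c z q N + pf (aj j) (kj j) z q.
Proof.
  replace (aj (S j)) with (q * aj j) by (unfold aj; simpl; ring).
  replace (kj (S j)) with (q * kj j) by (unfold kj; simpl; ring).
  apply telescope_sum.
  - unfold aj, kj. rewrite <- Hc. ring.
  - apply z_nonzero.
  - apply one_minus_nonzero. rewrite Cmod_qaj_z.
    pose proof (pow_unit (Cmod q) j s_unit). pose proof rho_unit. nra.
  - rewrite shift_qk. apply factors_nonzero_shift, Hk.
  - rewrite shift_qkz. apply factors_nonzero_shift, Hkz.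
  - rewrite shift_qa. apply factors_nonzero_shift, Ha.
  - apply one_minus_pow_nonzero, Hq.
Qed.

Lemma telescope_iterate (N M : nat) :
  ps (term a k c z q) N
  = sum_below (fun j => bdry (aj j) (kj j) c z q N + pf (aj j) (kj j) z q) M
    + ps (term (aj M) (kj M) c z q) N.
Proof.
  induction M as [|M IH].
  - unfold aj, kj. simpl. rewrite !Cmult_1_l. ring.
  - rewrite IH. simpl. rewrite <- (telescope_shift M N). ring.
Qed.

Lemma core_bound : exists K, (0 <= K)%R /\
  forall j m, (Cmod (core (aj j) (kj j) c z q (S m)) <= K)%R.
Proof.
  destruct (factor_lower q Hq (q * k) Hk) as [dk [Hdk Hdk']].
  destruct (qp_shifted_lower q Hq (q * k / z) Hkz) as [d1 [Hd1 Hd1']].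
  destruct (qp_shifted_lower q Hq (q * a) Ha) as [d2 [Hd2 Hd2']].
  set (B := (exp (Cmod z / (1 - Cmod q)) * exp (Cmod c / (1 - Cmod q)))%R).
  assert (HB : (0 < B)%R) by (apply Rmult_lt_0_compat; apply exp_pos).
  assert (Hd : (0 < dk * d1 * d2)%R) by (repeat apply Rmult_lt_0_compat; assumption).
  exists (B / (dk * d1 * d2))%R. split; [apply Rlt_le, Rdiv_lt_0_compat; assumption|].
  intros j m. unfold core. apply Cmod_div_le; [|exact Hd|].
  - apply Cmod_mult_le; apply qp_upper; assumption.
  - assert (E1 : (dk <= Cmod (1 - kj j * q ^ S m))%R).
    { replace (kj j * q ^ S m) with (q * k * q ^ (j + m))
        by (unfold kj; rewrite Cpow_add_r; simpl; ring).
      apply Hdk'. }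
    assert (E2 : (d1 <= Cmod (qp (q * kj j / z) q (S m)))%R) by (rewrite shift_qkz; apply Hd1').
    assert (E3 : (d2 <= Cmod (qp (q * aj j) q (S m)))%R) by (rewrite shift_qa; apply Hd2').
    rewrite !Cmod_mult. apply Rmult_le_compat; [nra | lra | apply Rmult_le_compat; lra | exact E3].
Qed.

Lemma term_bound : exists KT, (0 <= KT)%R /\ forall j m,
  (Cmod (term (aj j) (kj j) c z q (S m))
   <= KT * Cmod q ^ j * Cmod (q * a / z) ^ S m)%R.
Proof.
  destruct core_bound as [K [HK HKb]].
  assert (Hs' : (0 < 1 - Cmod q)%R) by lra.
  pose proof (Cmod_ge_0 k).
  exists ((1 + Cmod k) / (1 - Cmod q) * K)%R.
  split; [apply Rmult_le_pos; [apply Rlt_le, Rdiv_lt_0_compat; lra | exact HK]|].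
  intros j m. unfold term.
  apply Rle_trans with ((1 + Cmod k) / (1 - Cmod q)
                        * (Cmod q ^ j * Cmod (q * a / z) ^ S m) * K)%R; [|right; ring].
  apply Cmod_mult_le; [apply Cmod_mult_le; [apply Cmod_div_le; [| exact Hs' |] |] | apply HKb].
  - eapply Rle_trans; [apply Cmod_1_minus_le|].
    unfold kj. rewrite !Cmod_mult, !Cmod_pow.
    pose proof (pow_unit (Cmod q) j s_unit). pose proof (pow_unit (Cmod q) (S m) s_unit).
    assert (Cmod q ^ j * Cmod k <= Cmod k)%R by nra.
    assert (0 <= Cmod q ^ j * Cmod k)%R by nra.
    assert (0 <= Cmod q ^ S m * Cmod q ^ S m <= 1)%R by (split; nra). nra.
  - eapply Rle_trans; [|apply Cmod_1_minus_ge]. rewrite Cmod_pow. simpl.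
    pose proof (pow_unit (Cmod q) m s_unit). nra.
  - rewrite Cmod_pow, Cmod_qaj_z. apply pow_shift_le; [exact s_unit | apply Cmod_ge_0].
Qed.

Lemma bdry_bound : exists KU, (0 <= KU)%R /\ forall j N,
  (Cmod (bdry (aj j) (kj j) c z q N)
   <= KU * Cmod (q * a / z) ^ S N * Cmod q ^ j)%R.
Proof.
  destruct core_bound as [K [HK HKb]].
  assert (Hr' : (0 < 1 - Cmod (q * a / z))%R) by (pose proof rho_unit; lra).
  pose proof (Cmod_ge_0 (k * a / z)).
  exists ((1 + Cmod (k * a / z)) / (1 - Cmod (q * a / z)) * K)%R.
  split; [apply Rmult_le_pos; [apply Rlt_le, Rdiv_lt_0_compat; lra | exact HK]|].
  intros j N. unfold bdry.
  apply Rle_trans with ((Cmod q ^ j * Cmod (q * a / z) ^ S N) * (1 + Cmod (k * a / z))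
                        / (1 - Cmod (q * a / z)) * K)%R; [|right; field; lra].
  apply Cmod_mult_le; [apply Cmod_div_le; [apply Cmod_mult_le | exact Hr' |] | apply HKb].
  - rewrite Cmod_opp, Cmod_pow, Cmod_qaj_z.
    apply pow_shift_le; [exact s_unit | apply Cmod_ge_0].
  - eapply Rle_trans; [apply Cmod_1_minus_le|].
    replace (kj j * aj j * q ^ S (S N) / z) with (k * a / z * q ^ (j + j + S (S N)))
      by (unfold kj, aj; rewrite !Cpow_add_r; field; apply z_nonzero).
    rewrite Cmod_mult, Cmod_pow.
    pose proof (pow_unit (Cmod q) (j + j + S (S N)) s_unit). nra.
  - eapply Rle_trans; [|apply Cmod_1_minus_ge]. rewrite Cmod_qaj_z.
    pose proof (pow_unit (Cmod q) j s_unit). pose proof rho_unit. nra.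
Qed.

Lemma g_shift_bound (x : C) (d : R) (j : nat) :
  (0 < d)%R -> (d <= Cmod (1 - x * q ^ j))%R ->
  (Cmod (g (x * q ^ j)) <= Cmod x / d * Cmod q ^ j)%R.
Proof.
  intros Hd H. unfold g. eapply Rle_trans.
  { apply (Cmod_div_le _ _ (Cmod (x * q ^ j)) d); [apply Rle_refl | exact Hd | exact H]. }
  rewrite Cmod_mult, Cmod_pow. right. field. lra.
Qed.

Lemma pf_bound : exists KC, (0 <= KC)%R /\
  forall j, (Cmod (pf (aj j) (kj j) z q) <= KC * Cmod q ^ j)%R.
Proof.
  destruct (factor_lower q Hq (q * k) Hk) as [dk [Hdk Hdk']].
  destruct (factor_lower q Hq (q * k / z) Hkz) as [dz [Hdz Hdz']].
  destruct (factor_lower q Hq (q * a) Ha) as [da [Hda Hda']].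
  set (dr := (1 - Cmod (q * a / z))%R).
  assert (Hdr : (0 < dr)%R) by (unfold dr; pose proof rho_unit; lra).
  assert (Hdr' : forall j, (dr <= Cmod (1 - q * a / z * q ^ j))%R).
  { intros j. eapply Rle_trans; [|apply Cmod_1_minus_ge].
    rewrite Cmod_mult, Cmod_pow. unfold dr.
    pose proof (pow_unit (Cmod q) j s_unit). pose proof rho_unit. nra. }
  set (KC := (Cmod (q * k) / dk + Cmod (q * a / z) / dr
              + Cmod (q * k / z) / dz + Cmod (q * a) / da)%R).
  exists KC. split.
  { unfold KC. repeat apply Rplus_le_le_0_compat;
      apply Rmult_le_pos; auto using Cmod_ge_0, Rlt_le, Rinv_0_lt_compat. }
  intros j. unfold pf.
  replace (q * aj j / z) with (q * a / z * q ^ j) by (unfold aj; field; apply z_nonzero).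
  rewrite shift_qkz, shift_qk, shift_qa.
  pose proof (g_shift_bound _ _ j Hdk (Hdk' j)). pose proof (g_shift_bound _ _ j Hdr (Hdr' j)).
  pose proof (g_shift_bound _ _ j Hdz (Hdz' j)). pose proof (g_shift_bound _ _ j Hda (Hda' j)).
  eapply Rle_trans; [apply Cmod_minus_le|].
  eapply Rle_trans; [apply Rplus_le_compat_r, Cmod_minus_le|].
  eapply Rle_trans; [apply Rplus_le_compat_r, Rplus_le_compat_r, Cmod_triangle|].
  unfold KC. lra.
Qed.

Lemma pf_sum_converges : exists l, cv (pf_sum a k z q) l.
Proof.
  destruct pf_bound as [KC [HKC HC]].
  apply (sum_below_converges _ KC (Cmod q) HKC ltac:(pose proof s_unit; lra)), HC.
Qed.

(** After [N] shifts, both the boundary terms and the remaining partial sum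
    are geometrically small, so the partial sums of the original series and
    of the partial-fraction series become arbitrarily close. *)
Lemma term_sum_close_to_pf_sum : forall eps, (eps > 0)%R -> exists N0, forall N, (N >= N0)%nat ->
  (Cmod (ps (term a k c z q) N - pf_sum a k z q N) < eps)%R.
Proof.
  intros eps Heps.
  destruct bdry_bound as [KU [HKU HU]]. destruct term_bound as [KT [HKT HT]].
  pose proof rho_unit as Hr. pose proof s_unit as Hs.
  set (s := Cmod q) in *. set (rho := Cmod (q * a / z)) in *.
  destruct (geom_small (KU / (1 - s)) rho ltac:(apply geom_sum_nonneg; lra) ltac:(lra)
              (eps / 2) ltac:(lra)) as [N1 HN1].
  destruct (geom_small (KT / (1 - rho)) s ltac:(apply geom_sum_nonneg; lra) ltac:(lra)
              (eps / 2) ltac:(lra)) as [N2 HN2].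
  exists (max N1 N2). intros N HN.
  specialize (HN1 N ltac:(lia)). specialize (HN2 N ltac:(lia)).
  rewrite (telescope_iterate N N), sum_below_plus. unfold pf_sum.
  fold (aj N) (kj N).
  set (B := sum_below (fun j => bdry (aj j) (kj j) c z q N) N).
  set (R := ps (term (aj N) (kj N) c z q) N).
  set (P := sum_below (fun j => pf (aj j) (kj j) z q) N).
  change (sum_below (fun j => pf (q ^ j * a) (q ^ j * k) z q) N) with P.
  replace (B + P + R - P) with (B + R) by ring.
  assert (HB : (Cmod B <= KU * rho ^ S N / (1 - s))%R).
  { apply sum_below_bound; [| lra | intros j; apply HU].
    pose proof (pow_le rho (S N) ltac:(lra)). nra. }
  assert (HR : (Cmod R <= KT * s ^ N / (1 - rho))%R).
  { apply ps_bound; [| lra | intros m; apply HT].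
    pose proof (pow_le s N ltac:(lra)). nra. }
  assert (Hpow : (rho ^ S N <= rho ^ N)%R).
  { simpl. pose proof (pow_le rho N ltac:(lra)). nra. }
  assert (HB' : (KU * rho ^ S N / (1 - s) <= KU / (1 - s) * rho ^ N)%R).
  { replace (KU * rho ^ S N / (1 - s))%R with (KU / (1 - s) * rho ^ S N)%R by (field; lra).
    apply Rmult_le_compat_l; [|exact Hpow].
    apply Rmult_le_pos; [lra | apply Rlt_le, Rinv_0_lt_compat; lra]. }
  replace (KT * s ^ N / (1 - rho))%R with (KT / (1 - rho) * s ^ N)%R in HR by (field; lra).
  eapply Rle_lt_trans; [apply Cmod_triangle|]. lra.
Qed.

End PartialFractions.

Lemma f_term_C (a k z q r : C) (n : nat) :
  @eq C (Defs.f_term a k z q r n)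
  (qp (q * r) q n * qp (- (q * r)) q n * qp k q n * qp z q n * qp (k / a) q n
  / (qp r q n * qp (- r) q n * qp (q * k) q n * qp (q * k / z) q n * qp (q * a) q n
     * (1 - q ^ n))
  * (q * a / z) ^ n).
Proof. unfold Defs.f_term. rewrite !Defs_Cpow. reflexivity. Qed.

Lemma well_poised_collapse (r q : C) (n : nat) :
  1 - r <> 0 -> 1 + r <> 0 ->
  qp (q * r) q n * qp (- (q * r)) q n
  = qp r q n * qp (- r) q n * (1 - r * r * q ^ n * q ^ n) / (1 - r * r).
Proof.
  intros H1 H2.
  assert (H2' : 1 - - r <> 0) by (replace (1 - - r) with (1 + r) by ring; exact H2).
  assert (H5 : 1 - r * r <> 0).
  { replace (1 - r * r) with ((1 - r) * (1 + r)) by ring. apply Cmult_neq_0; assumption. }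
  replace (q * r) with (r * q) by ring. replace (- (r * q)) with (- r * q) by ring.
  rewrite !qp_shift_div, !qpS by assumption.
  field. repeat split; assumption.
Qed.

Lemma f_term_reduce (a k z q r : C) (m : nat) :
  r * r = k -> a <> 0 -> Defs.denoms_nonzero a k z q r -> 1 - q ^ S m <> 0 ->
  @eq C (Defs.f_term a k z q r (S m)) (term a k (k / a) z q (S m)).
Proof.
  intros Hr Ha0 [_ [_ Hd]] Hq1.
  assert (Hr1 : factors_nonzero r q) by (apply factors_of_qp; intros n Hn; apply (Hd n Hn)).
  assert (Hr2 : factors_nonzero (- r) q) by (apply factors_of_qp; intros n Hn; apply (Hd n Hn)).
  assert (Hk : factors_nonzero (q * k) q) by (apply factors_of_qp; intros n Hn; apply (Hd n Hn)).
  assert (N4 : qp (q * k / z) q (S m) <> 0) by apply (Hd (S m) ltac:(lia)).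
  assert (N5 : qp (q * a) q (S m) <> 0) by apply (Hd (S m) ltac:(lia)).
  assert (R1 : 1 - r <> 0) by (apply (nonzero_by_eq _ _ (Hr1 0%nat)); simpl; ring).
  assert (R2 : 1 + r <> 0) by (apply (nonzero_by_eq _ _ (Hr2 0%nat)); simpl; ring).
  assert (K1 : 1 - k <> 0).
  { rewrite <- Hr. replace (1 - r * r) with ((1 - r) * (1 + r)) by ring.
    apply Cmult_neq_0; assumption. }
  assert (K2 : 1 - k * q ^ S m <> 0) by (apply (nonzero_by_eq _ _ (Hk m)); simpl; ring).
  assert (Ek : qp k q (S m) = qp (q * k) q (S m) * (1 - k) / (1 - k * q ^ S m)).
  { rewrite (Cmult_comm q k), qp_ratio. field. exact K2. }
  rewrite f_term_C, Ek, (well_poised_collapse r q (S m) R1 R2), Hr. unfold term, core.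
  pose proof (qp_nonzero _ _ (S m) Hr1). pose proof (qp_nonzero _ _ (S m) Hr2).
  pose proof (qp_nonzero _ _ (S m) Hk).
  field. repeat split; assumption.
Qed.

Lemma denoms_factors (a k z q r : C) : Defs.denoms_nonzero a k z q r ->
  a <> 0 /\ factors_nonzero (q * k) q /\ factors_nonzero (q * k / z) q
  /\ factors_nonzero (q * a) q.
Proof.
  intros [Ha [_ Hd]]. split; [exact Ha|].
  split; [|split]; apply factors_of_qp; intros n Hn; apply (Hd n Hn).
Qed.

Lemma f_is_pf_limit (a k z q r l : C) :
  r * r = k -> (Cmod q < 1)%R -> (Cmod (q * a) < Cmod z)%R ->
  Defs.denoms_nonzero a k z q r -> cv (pf_sum a k z q) l -> Defs.f_is a k z q r l.
Proof.
  intros Hr Hq Hqa Hd Hl.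
  destruct (denoms_factors a k z q r Hd) as [Ha0 [Hk [Hkz Ha]]].
  change (cv (ps (Defs.f_term a k z q r)) l).
  apply (cv_approx _ (pf_sum a k z q)); [|exact Hl].
  intros eps Heps.
  destruct (term_sum_close_to_pf_sum a k (k / a) z q Hq Hqa ltac:(field; exact Ha0)
              Hk Hkz Ha eps Heps) as [N0 HN0].
  exists N0. intros N HN.
  rewrite (ps_ext _ (term a k (k / a) z q)); [exact (HN0 N HN)|].
  intros m. apply f_term_reduce; auto using one_minus_pow_nonzero.
Qed.

(** * The quadratic transformation *)

Lemma g_square (X : C) : 1 - X <> 0 -> 1 + X <> 0 -> g (X * X) = (g X + g (- X)) / 2.
Proof.
  intros H1 H2. unfold g.
  assert (1 - X * X <> 0).
  { replace (1 - X * X) with ((1 - X) * (1 + X)) by ring. apply Cmult_neq_0; assumption. }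
  assert (1 - - X <> 0) by (replace (1 - - X) with (1 + X) by ring; exact H2).
  field. repeat split; assumption.
Qed.

Lemma pf_square (a k z q : C) : z <> 0 ->
  1 - q * k <> 0 -> 1 + q * k <> 0 -> 1 - q * a / z <> 0 -> 1 + q * a / z <> 0 ->
  1 - q * k / z <> 0 -> 1 + q * k / z <> 0 -> 1 - q * a <> 0 -> 1 + q * a <> 0 ->
  pf (a * a) (k * k) (z * z) (q * q) = (pf a k z q + pf (- a) (- k) z q) / 2.
Proof.
  intros Hz H1 H1' H2 H2' H3 H3' H4 H4'. unfold pf.
  replace (q * q * (a * a) / (z * z)) with ((q * a / z) * (q * a / z)) by (field; exact Hz).
  replace (q * q * (k * k) / (z * z)) with ((q * k / z) * (q * k / z)) by (field; exact Hz).
  replace (q * q * (k * k)) with ((q * k) * (q * k)) by ring.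
  replace (q * q * (a * a)) with ((q * a) * (q * a)) by ring.
  replace (q * - k) with (- (q * k)) by ring. replace (q * - a) with (- (q * a)) by ring.
  replace (- (q * a) / z) with (- (q * a / z)) by (field; exact Hz).
  replace (- (q * k) / z) with (- (q * k / z)) by (field; exact Hz).
  rewrite !g_square by assumption.
  field.
Qed.

Lemma pf_sum_square (a k z q : C) (N : nat) :
  (Cmod q < 1)%R -> (Cmod (q * a) < Cmod z)%R ->
  factors_nonzero (q * k) q -> factors_nonzero (q * - k) q ->
  factors_nonzero (q * k / z) q -> factors_nonzero (q * - k / z) q ->
  factors_nonzero (q * a) q -> factors_nonzero (q * - a) q ->
  pf_sum (a * a) (k * k) (z * z) (q * q) N
  = (pf_sum a k z q N + pf_sum (- a) (- k) z q N) / 2.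
Proof.
  intros Hq Hqa Hk Hk' Hkz Hkz' Ha Ha'.
  pose proof (z_nonzero a z q Hqa) as Hz.
  induction N as [|N IH]; unfold pf_sum in *; simpl sum_below; [field|].
  rewrite IH, !Cpow_mult_l.
  replace (q ^ N * q ^ N * (a * a)) with ((q ^ N * a) * (q ^ N * a)) by ring.
  replace (q ^ N * q ^ N * (k * k)) with ((q ^ N * k) * (q ^ N * k)) by ring.
  replace (q ^ N * - a) with (- (q ^ N * a)) by ring.
  replace (q ^ N * - k) with (- (q ^ N * k)) by ring.
  assert (Hsmall : (Cmod (q * (q ^ N * a) / z) < 1)%R).
  { rewrite Cmod_qaj_z by assumption.
    pose proof (pow_unit (Cmod q) N ltac:(pose proof (Cmod_ge_0 q); lra)).
    pose proof (rho_lt_1 a z q Hqa). pose proof (Cmod_ge_0 (q * a / z)). nra. }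
  rewrite pf_square; [field | exact Hz | ..].
  - apply (nonzero_by_eq _ _ (Hk N)). ring.
  - apply (nonzero_by_eq _ _ (Hk' N)). ring.
  - apply one_minus_nonzero, Hsmall.
  - replace (1 + q * (q ^ N * a) / z) with (1 - - (q * (q ^ N * a) / z)) by ring.
    apply one_minus_nonzero. rewrite Cmod_opp. exact Hsmall.
  - apply (nonzero_by_eq _ _ (Hkz N)). field. exact Hz.
  - apply (nonzero_by_eq _ _ (Hkz' N)). field. exact Hz.
  - apply (nonzero_by_eq _ _ (Ha N)). ring.
  - apply (nonzero_by_eq _ _ (Ha' N)). ring.
Qed.

Lemma square_conditions (a z q : C) :
  (Cmod q < 1)%R -> (Cmod (q * a) < Cmod z)%R ->
  (Cmod (q * q) < 1)%R /\ (Cmod (q * q * (a * a)) < Cmod (z * z))%R.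
Proof.
  intros Hq Hqa. rewrite !Cmod_mult. rewrite Cmod_mult in Hqa.
  pose proof (Cmod_ge_0 q). pose proof (Cmod_ge_0 a).
  assert (0 <= Cmod q * Cmod a)%R by nra. split; [nra|].
  replace (Cmod q * Cmod q * (Cmod a * Cmod a))%R with ((Cmod q * Cmod a) * (Cmod q * Cmod a))%R
    by ring.
  nra.
Qed.

Lemma opp_condition (a z q : C) :
  (Cmod (q * a) < Cmod z)%R -> (Cmod (q * - a) < Cmod z)%R.
Proof. intros H. replace (q * - a) with (- (q * a)) by ring. rewrite Cmod_opp. exact H. Qed.

From Pilot Require Import Defs.
Open Scope R_scope.

Theorem lemma2p4 (a k z q r1 r2 r3 : CC)
  (hr1 : Cmul r1 r1 = k)
  (hr2 : Cmul r2 r2 = Copp k)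
  (hr3 : Cmul r3 r3 = Cmul k k)
  (hq : Cmod q < 1)
  (hqa : Cmod (Cmul q a) < Cmod z)
  (hd1 : denoms_nonzero a k z q r1)
  (hd2 : denoms_nonzero (Copp a) (Copp k) z q r2)
  (hd3 : denoms_nonzero (Cmul a a) (Cmul k k) (Cmul z z) (Cmul q q) r3) :
  exists l1 l2 l3 : CC,
    f_is a k z q r1 l1 /\
    f_is (Copp a) (Copp k) z q r2 l2 /\
    f_is (Cmul a a) (Cmul k k) (Cmul z z) (Cmul q q) r3 l3 /\
    Cadd l1 l2 = Cmul (RtoC 2) l3.
Proof.
  pose proof (opp_condition a z q hqa) as hqa2.
  destruct (square_conditions a z q hq hqa) as [hq3 hqa3].
  destruct (denoms_factors _ _ _ _ _ hd1) as [_ [Hk [Hkz Ha]]].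
  destruct (denoms_factors _ _ _ _ _ hd2) as [_ [Hk' [Hkz' Ha']]].
  destruct (pf_sum_converges a k z q hq hqa Hk Hkz Ha) as [l1 Hl1].
  destruct (pf_sum_converges _ _ z q hq hqa2 Hk' Hkz' Ha') as [l2 Hl2].
  exists l1, l2, (/ 2 * (l1 + l2))%C.
  split; [|split; [|split]].
  - exact (f_is_pf_limit _ _ _ _ _ _ hr1 hq hqa hd1 Hl1).
  - exact (f_is_pf_limit _ _ _ _ _ _ hr2 hq hqa2 hd2 Hl2).
  - apply (f_is_pf_limit _ _ _ _ _ _ hr3 hq3 hqa3 hd3).
    apply (cv_ext _ (fun N => / 2 * (pf_sum a k z q N + pf_sum (- a) (- k) z q N))%C).
    + intros N. apply (eq_trans (pf_sum_square a k z q N hq hqa Hk Hk' Hkz Hkz' Ha Ha')).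
      field.
    + apply cv_scale, cv_plus; assumption.
  - change (@eq C (l1 + l2) (2 * (/ 2 * (l1 + l2))))%C. field.
Qed.
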